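(* Let $\mathcal{P}_t=\{0=s_0<s_1<\dots<s_{N_t}=t\}$, let $\mathbf{Y}_{s_0},\dots,\mathbf{Y}_{s_{N_t}}\in\mathbb{R}^d$, and define forward differences by $\hat{D}^0\mathbf{Y}_{s_n}=\mathbf{Y}_{s_n}$ and $\hat{D}^k\mathbf{Y}_{s_n}=(\hat{D}^{k-1}\mathbf{Y}_{s_{n+1}}-\hat{D}^{k-1}\mathbf{Y}_{s_n})/(s_{n+1}-s_n)$. Then for $k\in\{1,\dots,p-1\}$ and $n\in\{0,\dots,N_t-k\}$, $$\hat{D}^k\mathbf{Y}_{s_n}=\sum_{i=1}^k(-1)^{k+i}\sum_{\substack{n_1,\dots,n_i\ge1\\ n_1+\dots+n_i=k}}(s_{n+1}-s_n)^{-n_1}\cdots(s_{n+i}-s_{n+i-1})^{-n_i}\,(\mathbf{Y}_{s_{n+i}}-\mathbf{Y}_{s_{n+i-1}}).$$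
   Context: $p\ge2$ is an integer; the $n_j$ range over positive integers. *)

From HB Require Import structures.
From mathcomp Require Import all_boot all_order all_algebra.
Set Implicit Arguments. Unset Strict Implicit. Unset Printing Implicit Defensive.
Import Order.TTheory GRing.Theory Num.Theory.
Local Open Scope ring_scope.

Fixpoint Dhat (R : realFieldType) (d : nat) (s : nat -> R) (Y : nat -> 'rV[R]_d)
    (k n : nat) {struct k} : 'rV[R]_d :=
  match k with
  | 0 => Y n
  | k'.+1 => (s n.+1 - s n)^-1 *: (Dhat s Y k' n.+1 - Dhat s Y k' n)
  end.

(* c : 'I_i -> 'I_k.+1 encodes (n_1,...,n_i) as a composition of k into i
   positive parts. *)
Definition is_composition (k i : nat) (c : {ffun 'I_i -> 'I_k.+1}) : bool :=
  [forall j, (0 < c j)%N] && ((\sum_(j < i) (c j : nat))%N == k).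

(** Unfolding the recursion [Dhat^(k+1) Y_n = (Dhat^k Y_(n+1) - Dhat^k Y_n) / h_n],
    with [h_m = s_(m+1) - s_m], the coefficient of [Y_(n+i) - Y_(n+i-1)] in
    [Dhat^k Y_n] is, up to the sign [(-1)^(k+i)], a polynomial [W(i, k, n)] in the
    [h_m^-1] obeying [W(i+1, k+1, n) = h_n^-1 (W(i, k, n+1) + W(i+1, k, n))].
    The sum over compositions [(n_1, ..., n_i)] of [k] of
    [h_n^-n_1 ... h_(n+i-1)^-n_i] obeys the same recurrence: a composition of
    [k+1] either starts with a part [1], followed by a composition of [k], or is a
    composition of [k] whose first part has been increased by one. *)

From HB Require Import structures.
From mathcomp Require Import all_boot all_order all_algebra.
Set Implicit Arguments. Unset Strict Implicit. Unset Printing Implicit Defensive.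
Import Order.TTheory GRing.Theory Num.Theory.
Local Open Scope ring_scope.

Section FfunCons.
Variable T : Type.

Definition ffun_cons (i : nat) (a : T) (g : {ffun 'I_i -> T}) : {ffun 'I_i.+1 -> T} :=
  [ffun j => if unlift ord0 j is Some j' then g j' else a].

Lemma ffun_cons0 i a (g : {ffun 'I_i -> T}) : ffun_cons a g ord0 = a.
Proof. by rewrite ffunE unlift_none. Qed.

Lemma ffun_consS i a (g : {ffun 'I_i -> T}) j : ffun_cons a g (lift ord0 j) = g j.
Proof. by rewrite ffunE liftK. Qed.

End FfunCons.

Lemma big_ffun_cons (V : Type) (idx : V) (op : Monoid.com_law idx)
    (T : finType) (i : nat) (F : {ffun 'I_i.+1 -> T} -> V) :
  \big[op/idx]_(f : {ffun 'I_i.+1 -> T}) F f =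
  \big[op/idx]_(a : T) \big[op/idx]_(g : {ffun 'I_i -> T}) F (ffun_cons a g).
Proof.
rewrite pair_big /= (reindex (fun p : T * {ffun 'I_i -> T} => ffun_cons p.1 p.2)) //=.
exists (fun f => (f ord0, [ffun j => f (lift ord0 j)])) => [[a g] _ | f _] /=.
  by rewrite ffun_cons0; congr (_, _); apply/ffunP => j; rewrite ffunE ffun_consS.
by apply/ffunP => j; rewrite ffunE; case: unliftP => [j'|] ->; rewrite ?ffunE.
Qed.

Definition composition_of (M i k : nat) (c : {ffun 'I_i -> 'I_M}) : bool :=
  [forall j, (0 < c j)%N] && ((\sum_(j < i) (c j : nat))%N == k).

Lemma composition_of_cons M i k (a : 'I_M) (g : {ffun 'I_i -> 'I_M}) :
  composition_of k (ffun_cons a g) = (0 < a <= k)%N && composition_of (k - a) g.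
Proof.
rewrite /composition_of big_ord_recl ffun_cons0.
under eq_bigr do rewrite ffun_consS.
have -> : [forall j, 0 < ffun_cons a g j]%N = (0 < a)%N && [forall j, 0 < g j]%N.
  apply/forallP/andP => [H | [a0 /forallP H] j].
    by split; [rewrite -(ffun_cons0 a g) | apply/forallP => j; rewrite -(ffun_consS a g)].
  by case: (unliftP ord0 j) => [j'|] ->; rewrite ?ffun_consS ?ffun_cons0.
case: (0 < a)%N; rewrite //=; case: leqP => [ak | ka].
  by congr (_ && _); apply/eqP/eqP => [<-|->]; [rewrite addKn | rewrite subnKC].
by rewrite andbC; case: eqP => // sum_k; move: ka; rewrite -sum_k ltnNge leq_addr.
Qed.

Section CompositionWeights.
Variable R : pzSemiRingType.
Implicit Types (u : nat -> R) (M i k n : nat).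

Definition composition_sum u M i k n : R :=
  \sum_(c : {ffun 'I_i -> 'I_M} | composition_of k c) \prod_(j < i) u (n + j)%N ^+ c j.

Fixpoint composition_weight u i k n : R :=
  if i is i'.+1 then
    \sum_(a < k.+1 | (0 < a)%N) u n ^+ a * composition_weight u i' (k - a) n.+1
  else (k == 0%N)%:R.

Lemma composition_sumS u M i k n :
  composition_sum u M i.+1 k n =
  \sum_(a : 'I_M | (0 < a <= k)%N) u n ^+ a * composition_sum u M i (k - a) n.+1.
Proof.
rewrite /composition_sum big_mkcond big_ffun_cons [RHS]big_mkcond.
apply: eq_bigr => a _; rewrite [in RHS]big_mkcond mulr_sumr.
under eq_bigr do rewrite composition_of_cons.
case: (0 < a <= k)%N; last by rewrite big1.
apply: eq_bigr => g _; case: composition_of; last by rewrite mulr0.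
rewrite big_ord_recl ffun_cons0 addn0; congr (_ * _).
by apply: eq_bigr => j _; rewrite ffun_consS addSnnS.
Qed.

Lemma composition_sumE u M i k n :
  (k < M)%N -> composition_sum u M i k n = composition_weight u i k n.
Proof.
elim: i k n => [|i IHi] k n kM.
  have compositions0 (c : {ffun 'I_0 -> 'I_M}) : composition_of k c = (k == 0%N).
    by rewrite /composition_of big_ord0 eq_sym andb_idl // => _; apply/forallP => -[].
  rewrite /composition_sum /=; under eq_bigl do rewrite compositions0.
  case: eqP => _; last by rewrite big_pred0.
  by rewrite (big_pred1 [ffun=> Ordinal kM]) ?big_ord0 // => c; symmetry; apply/eqP/ffunP => -[].
rewrite composition_sumS /= (big_ord_widen_cond M (fun a => 0 < a)%N
  (fun a => u n ^+ a * composition_weight u i (k - a) n.+1) kM).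
apply: eq_big => [a | a /andP[_ ak]]; first by rewrite ltnS.
by rewrite IHi // (leq_ltn_trans (leq_subr _ _) kM).
Qed.

Lemma composition_weightSS u i k n :
  composition_weight u i.+1 k.+1 n =
  u n * (composition_weight u i k n.+1 + composition_weight u i.+1 k n).
Proof.
have bump0 m : bump 0 m = m.+1 by [].
rewrite /= big_mkcond big_ord_recl /= add0r big_ord_recl /= bump0 expr1 subSS subn0.
rewrite mulrDr; congr (_ + _).
rewrite [in RHS]big_mkcond [in RHS]big_ord_recl /= add0r mulr_sumr.
by apply: eq_bigr => a _; rewrite !bump0 subSS exprS mulrA.
Qed.

Lemma composition_weight_small u i k n :
  (k < i)%N -> composition_weight u i k n = 0.
Proof.
elim: i k n => [|i IHi] k n //= ki.
apply: big1 => a a0; rewrite IHi ?mulr0 // -ltnS (leq_trans _ ki) //.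
by rewrite ltnS ltn_subrL a0 (leq_trans a0 (ltn_ord a)).
Qed.

Lemma composition_weight11 u n : composition_weight u 1 1 n = u n.
Proof. by rewrite /= big_mkcond !big_ord_recl big_ord0 /= expr1 mulr1 addr0 add0r. Qed.

End CompositionWeights.

Arguments composition_weight : simpl never.

Lemma signr_addSS (R : pzRingType) (a b : nat) :
  (-1 : R) ^+ (a.+1 + b.+1) = (-1) ^+ (a + b).
Proof. by rewrite addSn addnS !exprS !mulN1r opprK. Qed.

Section ForwardDifferences.
Variables (R : realFieldType) (d : nat) (s : nat -> R) (Y : nat -> 'rV[R]_d).

Let step_inv m := (s m.+1 - s m)^-1.

Definition Dhat_expansion k n : 'rV[R]_d :=
  \sum_(i < k.+1) (-1) ^+ (k + i) *:
    (composition_weight step_inv i.+1 k.+1 n *: (Y (n + i.+1)%N - Y (n + i))).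

Lemma Dhat_expansionS k n :
  Dhat_expansion k.+1 n = step_inv n *: (Dhat_expansion k n.+1 - Dhat_expansion k n).
Proof.
rewrite /Dhat_expansion scalerBr.
under eq_bigr do rewrite composition_weightSS mulrDr scalerDl scalerDr.
rewrite big_split /=; congr (_ + _).
  rewrite big_ord_recl (_ : composition_weight _ ord0 k.+1 _ = 0) //.
  rewrite mulr0 !scale0r scaler0 add0r.
  rewrite scaler_sumr; apply: eq_bigr => i _.
  by rewrite lift0 /= signr_addSS !addSnnS !scalerA mulrCA mulrA.
rewrite big_ord_recr /= composition_weight_small // mulr0 !scale0r scaler0 addr0.
rewrite scaler_sumr -sumrN; apply: eq_bigr => i _.
by rewrite addSn exprS mulN1r !scalerA -scaleNr mulNr mulrCA mulrA.
Qed.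

Lemma DhatE k n : Dhat s Y k.+1 n = Dhat_expansion k n.
Proof.
elim: k n => [|k IHk] n; last by rewrite Dhat_expansionS -!IHk.
by rewrite /Dhat_expansion big_ord1 /= composition_weight11 expr0 scale1r addn1 addn0.
Qed.

End ForwardDifferences.

(* Only [1 <= k] is needed: the identity is algebraic and holds on any grid, since
   a repeated grid point yields the junk inverse [0^-1 = 0] on both sides. *)
Theorem lemma7 (R : realFieldType) (d p N : nat) (t : R)
  (s : nat -> R) (Y : nat -> 'rV[R]_d)
  (hp : (2 <= p)%N)
  (hs0 : s 0%N = 0) (hsN : s N = t)
  (hinc : forall m : nat, (m < N)%N -> s m < s m.+1)
  (k n : nat) (hk1 : (1 <= k)%N) (hk2 : (k <= p - 1)%N) (hn : (n <= N - k)%N) :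
  Dhat s Y k n =
  \sum_(1 <= i < k.+1)
    (-1) ^+ (k + i) *:
    \sum_(c : {ffun 'I_i -> 'I_k.+1} | is_composition c)
      ((\prod_(j < i) (s (n + j.+1)%N - s (n + j)%N) ^- (c j : nat)) *:
         (Y (n + i)%N - Y (n + i).-1)).
Proof.
case: k hk1 {hk2 hn} => [//|k] _.
rewrite DhatE /Dhat_expansion big_add1 big_mkord; apply: eq_bigr => i _.
rewrite signr_addSS -scaler_suml addnS -(composition_sumE _ _ _ (ltnSn k.+1)).
congr (_ *: (_ *: _)); apply: eq_bigr => c _; apply: eq_bigr => j _.
by rewrite addnS exprVn.
Qed.
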